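(* Let $(a_0,\ldots,a_n)$ be a finite sequence of positive integers and $m\ge 1$ an integer. For a positive integer $N$ let $\beta^N$ be the number whose continued fraction digits (indexed from $0$) are $a_0,\ldots,a_n$ in positions $0,\ldots,n$, $N$ in position $n+m$, and $1$ in all other positions. Then for every positive integer $N$: (1) for $0\le i\le n+m$, $\left|\log\frac{\alpha_i(\beta^N)}{\alpha_i(\beta^{N+1})}\right|<2^{i-(n+m)}/N$; (2) for $0\le i<n+m$, $\left|\log\frac{\alpha_i(\beta^N)}{\alpha_i(\beta^1)}\right|<2^{i-(n+m)}$; (3) for $0\le i<n+m$, $\left|\log\frac{\log(1/\alpha_i(\beta^N))}{\log(1/\alpha_i(\beta^{N+1}))}\right|<2^{i-(n+m)+1}$; (4) for $0\le i<n+m-1$, $\left|\log\frac{\log(1/\alpha_i(\beta^N))}{\log(1/\alpha_i(\beta^1))}\right|<2^{i-(n+m)+1}$.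
   Context: For positive integers $d_0,d_1,\ldots$, $[d_0,d_1,d_2,\ldots]$ denotes the continued fraction $\cfrac{1}{d_0+\cfrac{1}{d_1+\cfrac{1}{d_2+\cdots}}}$, and for $\beta=[d_0,d_1,\ldots]$ we write $\alpha_j(\beta)=[d_j,d_{j+1},\ldots]$. *)

From Stdlib Require Import Reals Lra Lia ZArith.
From Coquelicot Require Import Coquelicot.
Open Scope R_scope.

Fixpoint cf_conv (d : nat -> nat) (k : nat) : R :=
  match k with
  | O => 0
  | S k' => / (INR (d O) + cf_conv (fun j => d (S j)) k')
  end.

(* Value of the infinite continued fraction [d 0, d 1, d 2, ...]
   = 1/(d0 + 1/(d1 + ...)), defined as the limit of its convergents. *)
Definition cf (d : nat -> nat) : R := real (Lim_seq (cf_conv d)).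

Definition alpha (j : nat) (d : nat -> nat) : R := cf (fun k => d (j + k)%nat).

Definition beta_digits (a : nat -> nat) (n m N : nat) (k : nat) : nat :=
  if (k <=? n)%nat then a k
  else if (k =? n + m)%nat then N
  else 1%nat.

Definition pow2Z (z : Z) : R := powerRZ 2 z.

(* The numbers alpha_i(beta^N) for different N share their digits below position
   n+m, and for c >= 1 the map x |-> 1/(c+x) halves |log(x/y)| on (0,1]. Hence the
   discrepancy at position i is at most 2^(i-(n+m)) times the discrepancy at position
   n+m, where alpha_(n+m)(beta^N) = 1/(N + invphi) with invphi = [1,1,1,...]; this
   gives a bound 1/N between N and N+1, and a bound 1/2 one position earlier between
   N and 1. For the iterated logarithms, log(1/alpha_i) = log(d_i + alpha_(i+1)) and
   x |-> log(c+x) does not increase |log(x/y)|, which costs one position. *)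

From Stdlib Require Import Reals Lra Lia ZArith.
From Coquelicot Require Import Coquelicot.
Open Scope R_scope.

Lemma cf_conv_ext (d e : nat -> nat) (k : nat) :
  (forall j, d j = e j) -> cf_conv d k = cf_conv e k.
Proof.
  revert d e; induction k as [|k IH]; intros d e Hde; simpl; [reflexivity|].
  rewrite Hde, (IH (fun j => d (S j)) (fun j => e (S j))); auto.
Qed.

Lemma cf_ext (d e : nat -> nat) : (forall j, d j = e j) -> cf d = cf e.
Proof.
  intros Hde; unfold cf.
  rewrite (Lim_seq_ext _ _ (fun k => cf_conv_ext d e k Hde)); reflexivity.
Qed.

Lemma cf_of_lim (d : nat -> nat) (l : R) : is_lim_seq (cf_conv d) l -> cf d = l.
Proof. intros Hl; unfold cf; rewrite (is_lim_seq_unique _ _ Hl); reflexivity. Qed.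

Definition invphi : R := (sqrt 5 - 1) / 2.

Lemma invphi_fix : invphi * (1 + invphi) = 1.
Proof.
  unfold invphi; assert (H5 : sqrt 5 * sqrt 5 = 5) by (apply sqrt_sqrt; lra); nra.
Qed.

Lemma invphi_bounds : 0.61 < invphi < 0.62.
Proof.
  unfold invphi.
  assert (H5 : sqrt 5 * sqrt 5 = 5) by (apply sqrt_sqrt; lra).
  pose proof (sqrt_pos 5); split; nra.
Qed.

Lemma cf_conv_ones_ge0 (k : nat) : 0 <= cf_conv (fun _ => 1%nat) k.
Proof.
  induction k; simpl; [lra|].
  apply Rlt_le, Rinv_0_lt_compat; lra.
Qed.

(* [1/(1+x) - invphi = invphi (invphi - x) / (1+x)], so each step contracts the
   distance to [invphi] by the factor [invphi]. *)
Lemma cf_conv_ones_dist (k : nat) :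
  Rabs (cf_conv (fun _ => 1%nat) k - invphi) <= invphi ^ S k.
Proof.
  pose proof invphi_fix; pose proof invphi_bounds.
  induction k as [|k IH]; simpl.
  - rewrite Rabs_left1; lra.
  - simpl in IH.
    pose proof (cf_conv_ones_ge0 k) as Hc.
    set (c := cf_conv (fun _ => 1%nat) k) in *.
    assert (Hinv : 0 < / (1 + c) <= 1).
    { split; [apply Rinv_0_lt_compat; lra|].
      rewrite <- Rinv_1; apply Rinv_le_contravar; lra. }
    replace (/ (1 + c) - invphi) with (invphi * ((invphi - c) * / (1 + c)))
      by (field_simplify_eq; [nra | lra]).
    rewrite !Rabs_mult, Rabs_minus_sym, (Rabs_pos_eq invphi), (Rabs_pos_eq (/ (1 + c)))
      by lra.
    pose proof (Rabs_pos (c - invphi)).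
    apply Rmult_le_compat_l; [lra|].
    rewrite <- (Rmult_1_r (invphi * invphi ^ k)).
    apply Rmult_le_compat; lra.
Qed.

Lemma is_lim_seq_cf_conv_ones : is_lim_seq (cf_conv (fun _ => 1%nat)) invphi.
Proof.
  pose proof invphi_bounds.
  assert (Hgeom : is_lim_seq (fun k => invphi ^ S k) 0).
  { apply (is_lim_seq_incr_1 (fun k => invphi ^ k)), is_lim_seq_geom.
    rewrite Rabs_pos_eq; lra. }
  apply (is_lim_seq_le_le (fun k => invphi - invphi ^ S k) _
           (fun k => invphi + invphi ^ S k)).
  - intros k; apply Rabs_le_between', cf_conv_ones_dist.
  - replace (Finite invphi) with (Rbar_minus invphi 0) by (simpl; f_equal; ring).
    apply is_lim_seq_minus'; [apply is_lim_seq_const | exact Hgeom].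
  - replace (Finite invphi) with (Rbar_plus invphi 0) by (simpl; f_equal; ring).
    apply is_lim_seq_plus'; [apply is_lim_seq_const | exact Hgeom].
Qed.

Lemma cf_ones : cf (fun _ => 1%nat) = invphi.
Proof. exact (cf_of_lim _ _ is_lim_seq_cf_conv_ones). Qed.

Lemma is_lim_seq_cf_conv_cons (d : nat -> nat) (l : R) :
  (1 <= d O)%nat -> 0 <= l -> is_lim_seq (cf_conv (fun j => d (S j))) l ->
  is_lim_seq (cf_conv d) (/ (INR (d O) + l)).
Proof.
  intros Hd0 Hl Htail.
  apply is_lim_seq_incr_1.
  assert (1 <= INR (d O)) by (apply (le_INR 1); exact Hd0).
  assert (Hsum : is_lim_seq (fun k => INR (d O) + cf_conv (fun j => d (S j)) k)
                   (INR (d O) + l)).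
  { apply is_lim_seq_plus'; [apply is_lim_seq_const | exact Htail]. }
  apply (is_lim_seq_inv _ _ Hsum); intros E; injection E; lra.
Qed.

Lemma is_lim_seq_cf_conv_eventually_one (d : nat -> nat) (K : nat) :
  (forall k, (1 <= d k)%nat) -> (forall k, (K <= k)%nat -> d k = 1%nat) ->
  is_lim_seq (cf_conv d) (cf d) /\ 0 < cf d < 1.
Proof.
  pose proof invphi_bounds.
  revert d; induction K as [|K IH]; intros d d_ge1 Hone.
  - assert (Hcf : cf d = invphi).
    { rewrite <- cf_ones; apply cf_ext; intros j; apply Hone; lia. }
    rewrite Hcf; split; [|lra].
    apply (is_lim_seq_ext (cf_conv (fun _ => 1%nat))); [|exact is_lim_seq_cf_conv_ones].
    intros k; apply cf_conv_ext; intros j; symmetry; apply Hone; lia.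
  - destruct (IH (fun j => d (S j))) as [Htail Hbounds]; [auto | intros k Hk; apply Hone; lia|].
    pose proof (is_lim_seq_cf_conv_cons d _ (d_ge1 O) (Rlt_le _ _ (proj1 Hbounds)) Htail)
      as Hlim.
    rewrite (cf_of_lim _ _ Hlim); split; [exact Hlim|].
    assert (1 <= INR (d O)) by (apply (le_INR 1), d_ge1).
    split; [apply Rinv_0_lt_compat; lra|].
    rewrite <- Rinv_1; apply Rinv_lt_contravar; lra.
Qed.

Lemma cf_cons_eventually_one (d : nat -> nat) (K : nat) :
  (forall k, (1 <= d k)%nat) ->
  (forall k, (K <= k)%nat -> d k = 1%nat) ->
  cf d = / (INR (d O) + cf (fun j => d (S j))).
Proof.
  intros d_ge1 Hone.
  destruct (is_lim_seq_cf_conv_eventually_one (fun j => d (S j)) K (fun k => d_ge1 (S k)))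
    as [Htail Hbounds]; [intros k Hk; apply Hone; lia|].
  apply cf_of_lim, is_lim_seq_cf_conv_cons; [apply d_ge1 | lra | exact Htail].
Qed.

Lemma alpha_bounds_eventually_one (d : nat -> nat) (K i : nat) :
  (forall k, (1 <= d k)%nat) ->
  (forall k, (K <= k)%nat -> d k = 1%nat) -> 0 < alpha i d < 1.
Proof.
  intros d_ge1 Hone; apply (is_lim_seq_cf_conv_eventually_one _ K (fun k => d_ge1 (i + k)%nat)).
  intros k Hk; apply Hone; lia.
Qed.

Lemma alpha_cons_eventually_one (d : nat -> nat) (K i : nat) :
  (forall k, (1 <= d k)%nat) ->
  (forall k, (K <= k)%nat -> d k = 1%nat) ->
  alpha i d = / (INR (d i) + alpha (S i) d).
Proof.
  intros d_ge1 Hone; unfold alpha.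
  rewrite (cf_cons_eventually_one _ K (fun k => d_ge1 (i + k)%nat))
    by (intros k Hk; apply Hone; lia).
  rewrite Nat.add_0_r; do 2 f_equal.
  apply cf_ext; intros j; f_equal; lia.
Qed.

Lemma alpha_eventually_ones (d : nat -> nat) (K : nat) :
  (forall k, (K <= k)%nat -> d k = 1%nat) -> alpha K d = invphi.
Proof.
  intros Hone; unfold alpha; rewrite <- cf_ones.
  apply cf_ext; intros j; apply Hone; lia.
Qed.

Definition log_dist (x y : R) : R := Rabs (ln (x / y)).

Lemma log_dist_sub (x y : R) : 0 < x -> 0 < y -> log_dist x y = Rabs (ln x - ln y).
Proof. intros Hx Hy; unfold log_dist; rewrite ln_div; auto. Qed.

Lemma log_dist_inv (x y : R) : 0 < x -> 0 < y -> log_dist (/ x) (/ y) = log_dist x y.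
Proof.
  intros Hx Hy.
  rewrite !log_dist_sub, !ln_Rinv, Rabs_minus_sym by (try apply Rinv_0_lt_compat; auto).
  f_equal; ring.
Qed.

Lemma log_dist_lt_exp (x y r : R) :
  0 < x -> 0 < y -> x < exp r * y -> y < exp r * x -> log_dist x y < r.
Proof.
  intros Hx Hy Hxy Hyx.
  pose proof (exp_pos r).
  assert (ln x < ln (exp r * y)) by (apply ln_increasing; auto).
  assert (ln y < ln (exp r * x)) by (apply ln_increasing; auto).
  rewrite !ln_mult, !ln_exp in * by auto.
  rewrite log_dist_sub by auto; apply Rabs_lt_between'; lra.
Qed.

Lemma ln_le_sub_1 (x : R) : 0 < x -> ln x <= x - 1.
Proof. intros Hx; pose proof (exp_ineq1_le (ln x)); rewrite exp_ln in *; lra. Qed.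

Lemma Rabs_sub_le_of_ordered (f g : R -> R) (P : R -> Prop) :
  (forall x y, P x -> P y -> y <= x -> 0 <= f x - f y <= g x - g y) ->
  forall x y, P x -> P y -> Rabs (f x - f y) <= Rabs (g x - g y).
Proof.
  intros Hfg x y Hx Hy.
  destruct (Rle_dec y x) as [Hyx | Hxy].
  - specialize (Hfg x y Hx Hy Hyx); rewrite !Rabs_pos_eq; lra.
  - specialize (Hfg y x Hy Hx ltac:(lra)).
    rewrite (Rabs_minus_sym (f x)), (Rabs_minus_sym (g x)), !Rabs_pos_eq; lra.
Qed.

(* The map [x |-> 1/(c+x)] is a 1/2-contraction for [log_dist] on (0,1]: its
   logarithmic derivative is [x/(c+x) <= 1/2]. *)
Lemma log_dist_inv_shift_le (c x y : R) :
  1 <= c -> 0 < x <= 1 -> 0 < y <= 1 -> log_dist (/ (c + x)) (/ (c + y)) <= / 2 * log_dist x y.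
Proof.
  intros Hc Hx Hy.
  rewrite log_dist_inv, !log_dist_sub by lra.
  replace (/ 2 * Rabs (ln x - ln y)) with (Rabs (/ 2 * ln x - / 2 * ln y))
    by (rewrite <- Rmult_minus_distr_l, Rabs_mult, Rabs_pos_eq; lra).
  apply (Rabs_sub_le_of_ordered (fun t => ln (c + t)) (fun t => / 2 * ln t)
           (fun t => 0 < t <= 1)); auto.
  clear x y Hx Hy; intros x y Hx Hy Hyx; split.
  - assert (ln (c + y) <= ln (c + x)) by (apply ln_le; lra); lra.
  - assert (Hprod : (c + x) * (c + x) * y <= x * ((c + y) * (c + y))).
    { assert (0 <= (x - y) * (c * c - x * y)) by (apply Rmult_le_pos; nra); nra. }
    apply ln_le in Hprod; [|apply Rmult_lt_0_compat; nra].
    rewrite !ln_mult in Hprod by nra; lra.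
Qed.

(* Equivalently, [ln (c+x) / x] is nonincreasing on [x > 0] when [c >= 1]. *)
Lemma log_dist_ln_shift_le (c x y : R) :
  1 <= c -> 0 < x -> 0 < y -> log_dist (ln (c + x)) (ln (c + y)) <= log_dist x y.
Proof.
  intros Hc Hx Hy.
  assert (Hln_pos : forall t, 0 < t -> 0 < ln (c + t))
    by (intros t Ht; rewrite <- ln_1; apply ln_increasing; lra).
  rewrite !log_dist_sub by auto.
  apply (Rabs_sub_le_of_ordered (fun t => ln (ln (c + t))) ln (fun t => 0 < t)); auto.
  clear x y Hx Hy; intros x y Hx Hy Hyx.
  pose proof (Hln_pos y Hy); pose proof (Hln_pos x Hx).
  assert (Hincr : ln (c + x) - ln (c + y) <= (x - y) / (c + y)).
  { rewrite <- ln_div by lra.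
    replace ((x - y) / (c + y)) with ((c + x) / (c + y) - 1) by (field; lra).
    apply ln_le_sub_1, Rdiv_lt_0_compat; lra. }
  assert (Hlow : y / (c + y) <= ln (c + y)).
  { pose proof (ln_le_sub_1 (/ (c + y)) ltac:(apply Rinv_0_lt_compat; lra)).
    rewrite ln_Rinv in * by lra.
    replace (y / (c + y)) with (1 - / (c + y) - (c - 1) / (c + y)) by (field; lra).
    assert (0 <= (c - 1) / (c + y)) by (apply Rdiv_le_0_compat; lra); lra. }
  assert (Hkey : y * ln (c + x) <= x * ln (c + y)).
  { assert (y * ((x - y) / (c + y)) <= (x - y) * ln (c + y)).
    { replace (y * ((x - y) / (c + y))) with ((x - y) * (y / (c + y))) by (field; lra).
      apply Rmult_le_compat_l; lra. }
    nra. }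
  split.
  - assert (ln (ln (c + y)) <= ln (ln (c + x))) by (apply ln_le; [lra | apply ln_le; lra]).
    lra.
  - apply ln_le in Hkey; [|nra].
    rewrite !ln_mult in Hkey by lra; lra.
Qed.

Lemma log_dist_shared_digits_le (X Y d : nat -> R) (K : nat) :
  (forall i, 0 < X i <= 1) -> (forall i, 0 < Y i <= 1) -> (forall i, 1 <= d i) ->
  (forall i, (i < K)%nat -> X i = / (d i + X (S i)) /\ Y i = / (d i + Y (S i))) ->
  forall i, (i <= K)%nat -> log_dist (X i) (Y i) <= (/ 2) ^ (K - i) * log_dist (X K) (Y K).
Proof.
  intros HX HY Hd Hrec i Hi.
  remember (K - i)%nat as k eqn:Hk; revert i Hi Hk.
  induction k as [|k IH]; intros i Hi Hk.
  - replace i with K by lia; simpl; lra.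
  - destruct (Hrec i ltac:(lia)) as [-> ->].
    eapply Rle_trans; [apply log_dist_inv_shift_le; auto|].
    simpl; rewrite Rmult_assoc; apply Rmult_le_compat_l; [lra|].
    apply IH; lia.
Qed.

Lemma log_dist_inv_shift_succ_lt (x t : R) :
  0 < x -> 0 < t -> log_dist (/ (x + t)) (/ (x + 1 + t)) < / x.
Proof.
  intros Hx Ht.
  assert (Hexp : 1 + / x < exp (/ x))
    by (apply exp_ineq1; apply Rgt_not_eq, Rinv_0_lt_compat; lra).
  assert (x + 1 + t < (1 + / x) * (x + t)).
  { replace ((1 + / x) * (x + t)) with (x + 1 + t + t / x) by (field; lra).
    assert (0 < t / x) by (apply Rdiv_lt_0_compat; lra); lra. }
  assert (0 < / x) by (apply Rinv_0_lt_compat; lra).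
  rewrite log_dist_inv by lra.
  apply log_dist_lt_exp; nra.
Qed.

Lemma log_dist_inv_shift_lt_half (c u v : R) :
  1 <= c -> 0 < u < 0.62 -> 0 < v < 0.62 -> log_dist (/ (c + u)) (/ (c + v)) < / 2.
Proof.
  intros Hc Hu Hv.
  assert (Hexp : 1.625 <= exp (/ 2)) by (pose proof (exp_ge_taylor (/ 2) 2); simpl in *; lra).
  rewrite log_dist_inv by lra.
  apply log_dist_lt_exp; nra.
Qed.

Lemma pow2Z_sub (i K : nat) :
  (i <= K)%nat -> pow2Z (Z.of_nat i - Z.of_nat K) = (/ 2) ^ (K - i).
Proof.
  intros Hi; unfold pow2Z.
  replace (Z.of_nat i - Z.of_nat K)%Z with (- Z.of_nat (K - i))%Z by lia.
  rewrite powerRZ_neg', <- pow_powerRZ, pow_inv; reflexivity.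
Qed.

Section BetaDigits.

Variables (a : nat -> nat) (n m : nat).
Hypothesis a_ge1 : forall k, (k <= n)%nat -> (1 <= a k)%nat.
Hypothesis m_ge1 : (1 <= m)%nat.

Local Notation M := (n + m)%nat.
Local Notation beta := (beta_digits a n m).

Lemma beta_digits_ge1 (N k : nat) : (1 <= N)%nat -> (1 <= beta N k)%nat.
Proof.
  intros HN; unfold beta_digits.
  destruct (Nat.leb_spec k n); [auto|].
  destruct (Nat.eqb_spec k M); lia.
Qed.

Lemma beta_digits_tail (N k : nat) : (M < k)%nat -> beta N k = 1%nat.
Proof.
  intros Hk; unfold beta_digits.
  destruct (Nat.leb_spec k n); [lia|].
  destruct (Nat.eqb_spec k M); lia.
Qed.

Lemma beta_digits_head (N N' k : nat) : (k < M)%nat -> beta N k = beta N' k.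
Proof.
  intros Hk; unfold beta_digits.
  destruct (Nat.leb_spec k n); [reflexivity|].
  destruct (Nat.eqb_spec k M); [lia | reflexivity].
Qed.

Lemma beta_digits_top (N : nat) : beta N M = N.
Proof.
  unfold beta_digits.
  destruct (Nat.leb_spec M n); [lia|].
  now rewrite Nat.eqb_refl.
Qed.

Lemma alpha_beta_bounds (N i : nat) : (1 <= N)%nat -> 0 < alpha i (beta N) < 1.
Proof.
  intros HN; apply (alpha_bounds_eventually_one _ (S M)).
  - intros k; apply beta_digits_ge1, HN.
  - intros k Hk; apply beta_digits_tail; lia.
Qed.

Lemma alpha_beta_cons (N i : nat) :
  (1 <= N)%nat -> alpha i (beta N) = / (INR (beta N i) + alpha (S i) (beta N)).
Proof.
  intros HN; apply (alpha_cons_eventually_one _ (S M)).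
  - intros k; apply beta_digits_ge1, HN.
  - intros k Hk; apply beta_digits_tail; lia.
Qed.

Lemma alpha_beta_top (N : nat) : (1 <= N)%nat -> alpha M (beta N) = / (INR N + invphi).
Proof.
  intros HN; rewrite alpha_beta_cons, beta_digits_top by exact HN.
  do 3 f_equal; apply alpha_eventually_ones.
  intros k Hk; apply beta_digits_tail; lia.
Qed.

Lemma log_dist_alpha_beta_le (N N' i K : nat) :
  (1 <= N)%nat -> (1 <= N')%nat -> (i <= K)%nat -> (K <= M)%nat ->
  log_dist (alpha i (beta N)) (alpha i (beta N'))
    <= (/ 2) ^ (K - i) * log_dist (alpha K (beta N)) (alpha K (beta N')).
Proof.
  intros HN HN' Hi HK.
  apply (log_dist_shared_digits_le (fun k => alpha k (beta N)) (fun k => alpha k (beta N'))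
           (fun k => INR (beta N k))); auto.
  - intros k; pose proof (alpha_beta_bounds N k HN); lra.
  - intros k; pose proof (alpha_beta_bounds N' k HN'); lra.
  - intros k; apply (le_INR 1), beta_digits_ge1, HN.
  - intros k Hk; split; [apply alpha_beta_cons, HN|].
    rewrite (beta_digits_head N N' k) by lia; apply alpha_beta_cons, HN'.
Qed.

Lemma log_dist_alpha_beta_succ_lt (N i : nat) :
  (1 <= N)%nat -> (i <= M)%nat ->
  log_dist (alpha i (beta N)) (alpha i (beta (S N))) < (/ 2) ^ (M - i) / INR N.
Proof.
  intros HN Hi.
  assert (1 <= INR N) by (apply (le_INR 1), HN).
  eapply Rle_lt_trans; [apply (log_dist_alpha_beta_le N (S N) i M); auto; lia|].
  apply Rmult_lt_compat_l; [apply pow_lt; lra|].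
  rewrite !alpha_beta_top, S_INR by lia.
  apply log_dist_inv_shift_succ_lt; pose proof invphi_bounds; lra.
Qed.

Lemma log_dist_alpha_beta_one_lt (N i : nat) :
  (1 <= N)%nat -> (i < M)%nat ->
  log_dist (alpha i (beta N)) (alpha i (beta 1)) < (/ 2) ^ (M - i).
Proof.
  intros HN Hi.
  pose proof invphi_bounds; pose proof invphi_fix.
  replace (M - i)%nat with (S (M - 1 - i)) by lia.
  eapply Rle_lt_trans; [apply (log_dist_alpha_beta_le N 1 i (M - 1)); auto; lia|].
  simpl; rewrite Rmult_comm; apply Rmult_lt_compat_r; [apply pow_lt; lra|].
  rewrite (alpha_beta_cons N), (alpha_beta_cons 1), (beta_digits_head N 1 (M - 1)) by lia.
  replace (S (M - 1)) with M by lia.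
  rewrite !alpha_beta_top by lia.
  assert (1 <= INR N) by (apply (le_INR 1), HN).
  assert (/ (INR N + invphi) <= / (1 + invphi))
    by (apply Rinv_le_contravar; lra).
  assert (/ (1 + invphi) = invphi) by (field_simplify_eq; lra).
  apply log_dist_inv_shift_lt_half.
  - apply (le_INR 1), beta_digits_ge1; lia.
  - split; [apply Rinv_0_lt_compat|]; lra.
  - simpl; lra.
Qed.

Lemma log_dist_ln_inv_alpha_beta_le (N N' i : nat) :
  (1 <= N)%nat -> (1 <= N')%nat -> (i < M)%nat ->
  log_dist (ln (/ alpha i (beta N))) (ln (/ alpha i (beta N')))
    <= log_dist (alpha (S i) (beta N)) (alpha (S i) (beta N')).
Proof.
  intros HN HN' Hi.
  rewrite (alpha_beta_cons N i), (alpha_beta_cons N' i), !Rinv_inv,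
    (beta_digits_head N' N i Hi) by assumption.
  apply log_dist_ln_shift_le; [apply (le_INR 1), beta_digits_ge1, HN | ..];
    apply alpha_beta_bounds; assumption.
Qed.

End BetaDigits.

Theorem mainTheorem5 (a : nat -> nat) (n m : nat)
  (ha : forall k : nat, (k <= n)%nat -> (1 <= a k)%nat)
  (hm : (1 <= m)%nat) :
  forall N : nat, (1 <= N)%nat ->
    (forall i : nat, (i <= n + m)%nat ->
       Rabs (ln (alpha i (beta_digits a n m N) / alpha i (beta_digits a n m (S N))))
         < pow2Z (Z.of_nat i - Z.of_nat (n + m)) / INR N)
 /\ (forall i : nat, (i < n + m)%nat ->
       Rabs (ln (alpha i (beta_digits a n m N) / alpha i (beta_digits a n m 1)))
         < pow2Z (Z.of_nat i - Z.of_nat (n + m)))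
 /\ (forall i : nat, (i < n + m)%nat ->
       Rabs (ln (ln (/ alpha i (beta_digits a n m N))
                 / ln (/ alpha i (beta_digits a n m (S N)))))
         < pow2Z (Z.of_nat i - Z.of_nat (n + m) + 1))
 /\ (forall i : nat, (i + 1 < n + m)%nat ->
       Rabs (ln (ln (/ alpha i (beta_digits a n m N))
                 / ln (/ alpha i (beta_digits a n m 1))))
         < pow2Z (Z.of_nat i - Z.of_nat (n + m) + 1)).
Proof.
  intros N HN.
  assert (HNinv : / INR N <= 1)
    by (rewrite <- Rinv_1; apply Rinv_le_contravar; [lra | apply (le_INR 1), HN]).
  split; [|split; [|split]]; intros i Hi;
    try (replace (Z.of_nat i - Z.of_nat (n + m) + 1)%Z
           with (Z.of_nat (S i) - Z.of_nat (n + m))%Z by lia);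
    rewrite pow2Z_sub by lia.
  - apply log_dist_alpha_beta_succ_lt; auto.
  - apply log_dist_alpha_beta_one_lt; auto.
  - eapply Rle_lt_trans; [apply log_dist_ln_inv_alpha_beta_le; auto; lia|].
    eapply Rlt_le_trans; [apply log_dist_alpha_beta_succ_lt; auto; lia|].
    pose proof (pow_le (/ 2) (n + m - S i) ltac:(lra)).
    unfold Rdiv; rewrite <- (Rmult_1_r ((/ 2) ^ _)) at 2.
    apply Rmult_le_compat_l; assumption.
  - eapply Rle_lt_trans; [apply log_dist_ln_inv_alpha_beta_le; auto; lia|].
    apply log_dist_alpha_beta_one_lt; auto; lia.
Qed.
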